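(* For all integers $t,a,b,r$ with $a\ge2$ and $b\ge1$, define \[ f(t,a,b,r)=\sum_{i=1}^{a-1}(-1)^{a+i}\binom{t-1}{i-1}\binom{t-2-a+r+i}{b-1}, \] \[ g(t,a,b,r)=-\binom{t-2}{a-2}\binom{t-2+r}{b-1}+\sum_{i=1}^{a-1}(-1)^{a+i+1}\binom{t-2}{i-1}\binom{t-2-a+r+i}{b-2}. \] Then $f(t,a,b,r)=g(t,a,b,r)$ for all such $t,a,b,r$.
   Context: Binomial coefficients are polynomials in the upper entry: $\binom{x}{k}=\frac{x(x-1)\cdots(x-k+1)}{k!}$ for integers $k\ge0$ and any integer $x$ (possibly negative), and $\binom{x}{k}=0$ for $k<0$. *)

From mathcomp Require Import all_boot all_order all_algebra.
Set Implicit Arguments. Unset Strict Implicit. Unset Printing Implicit Defensive.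
Import GRing.Theory Num.Theory.
Local Open Scope ring_scope.

Definition binz (x k : int) : rat :=
  match k with
  | Posz n => (\prod_(j < n) ((x - (j : nat)%:Z)%:~R : rat)) / (n`!)%:R
  | Negz _ => 0
  end.

From mathcomp Require Import all_boot all_order all_algebra.
From mathcomp Require Import ring zify.
Import GRing.Theory Num.Theory.
Local Open Scope ring_scope.

(* Write c_i = binom(t-2, i-1) and u_i = binom(t-2-a+r+i, b-1).  Pascal's rule
   gives binom(t-1, i-1) = c_i + c_(i-1) and binom(t-2-a+r+i, b-2) = u_(i+1) - u_i,
   so the difference of the two sums is an alternating sum of
   c_i u_(i+1) + c_(i-1) u_i, which telescopes to -c_(a-1) u_a. *)

Lemma binzS (x k : int) : binz (x + 1) k = binz x k + binz x (k - 1).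
Proof.
case: k => [[|n]|n] //; first by rewrite /binz /= !big_ord0 addr0.
have -> : Posz n.+1 - 1 = Posz n by lia.
rewrite /binz big_ord_recl big_ord_recr /= factS natrM.
have -> : \prod_(i < n) ((x + 1 - Posz (bump 0 i))%:~R : rat)
        = \prod_(i < n) ((x - Posz i)%:~R : rat).
  by apply: eq_bigr => i _; congr (_%:~R); rewrite /bump /=; lia.
have fact_neq0 : (n`!)%:R != 0 :> rat by rewrite pnatr_eq0 -lt0n fact_gt0.
rewrite !rmorphB rmorphD /= rmorph1 -!pmulrn; field.
by rewrite fact_neq0 addrC natr1 pnatr_eq0.
Qed.

Section AlternatingSums.

Variables (R : comPzRingType) (c u v : nat -> R).

Lemma sum_alt_telescope n :
  \sum_(1 <= i < n.+1) (-1) ^+ i * (c i * u i.+1 + c i.-1 * u i)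
  = (-1) ^+ n * c n * u n.+1 - c 0 * u 1.
Proof.
rewrite (telescope_sumr_eq (fun k => (-1) ^+ k.-1 * c k.-1 * u k)) ?expr0 ?mul1r //.
by case=> [|k] //= _; rewrite exprS; ring.
Qed.

Hypotheses (c0 : c 0 = 0) (uS : forall i, u i + v i = u i.+1).

Lemma sum_alt_pascal n :
  \sum_(1 <= i < n.+1) (-1) ^+ (n.+1 + i) * (c i + c i.-1) * u i
  = - c n * u n.+1 + \sum_(1 <= i < n.+1) (-1) ^+ (n.+1 + i + 1) * c i * v i.
Proof.
apply/eqP; rewrite -subr_eq -sumrB.
have -> : \sum_(1 <= i < n.+1)
    ((-1) ^+ (n.+1 + i) * (c i + c i.-1) * u i - (-1) ^+ (n.+1 + i + 1) * c i * v i)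
  = (-1) ^+ n.+1 * \sum_(1 <= i < n.+1) (-1) ^+ i * (c i * u i.+1 + c i.-1 * u i).
  rewrite big_distrr /=; apply: eq_bigr => i _; rewrite -uS !exprD; ring.
rewrite sum_alt_telescope c0 mul0r subr0 exprS.
apply/eqP; transitivity (- ((-1) ^+ n) ^+ 2 * c n * u n.+1); first by ring.
by rewrite sqrr_sign mulN1r.
Qed.

End AlternatingSums.

Theorem lemma5p5 (t a b r : int) (ha : 2 <= a) (hb : 1 <= b) :
  \sum_(1 <= i < `|a|%N) ((-1) ^+ (`|a| + i)%N
      * binz (t - 1) (i%:Z - 1) * binz (t - 2 - a + r + i%:Z) (b - 1))
  = - binz (t - 2) (a - 2) * binz (t - 2 + r) (b - 1)
    + \sum_(1 <= i < `|a|%N) ((-1) ^+ (`|a| + i + 1)%N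
      * binz (t - 2) (i%:Z - 1) * binz (t - 2 - a + r + i%:Z) (b - 2)).
Proof.
case: a ha => [[|n]|n] // _ /=.
pose c i := binz (t - 2) (i%:Z - 1).
pose u i := binz (t - 2 - Posz n.+1 + r + i%:Z) (b - 1).
pose v i := binz (t - 2 - Posz n.+1 + r + i%:Z) (b - 2).
have uS i : u i + v i = u i.+1.
  rewrite /u /v [b - 2](_ : _ = b - 1 - 1); last by lia.
  by rewrite -binzS; congr binz; lia.
rewrite (_ : binz (t - 2) (Posz n.+1 - 2) = c n); last by congr binz; lia.
rewrite (_ : binz (t - 2 + r) (b - 1) = u n.+1); last by congr binz; lia.
rewrite -(@sum_alt_pascal _ c u v erefl uS).
apply: eq_big_nat => i /andP[i_gt0 _].
rewrite [t - 1](_ : _ = t - 2 + 1) ?binzS; last by lia.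
by congr (_ * (_ + binz _ _) * _); lia.
Qed.
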